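(* Let $\mathcal{N}$ be a one-counter net. If Eve wins the one-token game $G_1$ on $\mathcal{N}$, then Eve has a winning strategy in the letter game on $\mathcal{N}$.
   Context: A one-counter net (OCN) is $\mathcal{N}=(Q,\Sigma,\Delta,q_0,F)$ with $Q$ finite, $\Sigma$ finite, $q_0\in Q$, $F\subseteq Q$, $\Delta\subseteq Q\times\Sigma\times\{-1,0,1\}\times Q$; configurations $(q,n)\in Q\times\mathbb{N}$, step $(q,n)\xrightarrow{a,d}(p,n+d)$ if $(q,a,d,p)\in\Delta$ and $n+d\ge0$; runs start at $(q_0,0)$ and are accepting if the last state is in $F$; $\mathcal{L}(\mathcal{N})$ is the set of words with an accepting run. Letter game: positions $(c,w)$, start $((q_0,0),\varepsilon)$; each round Adam picks $a\in\Sigma$, Eve picks a step $c\xrightarrow{a,d}c'$; if Eve has none and $wa$ is a prefix of a word of $\mathcal{L}(\mathcal{N})$ she loses; if $wa\in\mathcal{L}(\mathcal{N})$ but the state of $c'$ is not in $F$, Adam wins; otherwise continue from $(c',wa)$; Eve wins infinite plays. The game $G_1$ on $\mathcal{N}$: positions are pairs $(c^{E},c^{A})$ of configurations (Eve's token, Adam's token), starting at $((q_0,0),(q_0,0))$. Each round: Adam picks $a\in\Sigma$; Eve picks a step $c^E\xrightarrow{a,d}c^E_{+}$ for her token; Adam picks a step $c^A\xrightarrow{a,d'}c^A_{+}$ for his token. If Adam cannot move his token, he loses. If Eve cannot move her token while Adam can move his and extend his run to an accepting run, Eve loses. If both move and the state of $c^A_+$ is in $F$ but that of $c^E_+$ is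 not, Eve loses. Otherwise play continues from $(c^E_+,c^A_+)$; Eve wins infinite plays. *)

From HB Require Import structures.
From mathcomp Require Import all_boot all_order all_algebra.
Set Implicit Arguments. Unset Strict Implicit. Unset Printing Implicit Defensive.
Import Order.TTheory GRing.Theory Num.Theory.

Record ocn (Q Sigma : finType) := OCN {
  trans : Q -> Sigma -> int -> Q -> bool;
  init : Q;
  final : {set Q};
  trans_dir : forall q a d p, trans q a d p -> d \in [:: (-1)%R; 0%R; 1%R]
}.

Section OCN.
Variables (Q Sigma : finType) (N : ocn Q Sigma).

Definition conf := (Q * nat)%type.
Definition conf0 : conf := (init N, 0%N).

(* one step (q,n) --a,d--> (p, n+d), with n + d >= 0 *)
Definition step (c : conf) (a : Sigma) (c' : conf) : Prop :=
  exists d : int, trans N c.1 a d c'.1 /\ (Posz c'.2 = Posz c.2 + d)%R.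

Fixpoint reach (c : conf) (w : seq Sigma) (c' : conf) : Prop :=
  match w with
  | [::] => c = c'
  | a :: w' => exists c'', step c a c'' /\ reach c'' w' c'
  end.

Definition lang (w : seq Sigma) : Prop :=
  exists c', reach conf0 w c' /\ c'.1 \in final N.

Definition prefixL (w : seq Sigma) : Prop := exists u, lang (w ++ u).

Definition can_accept (c : conf) : Prop :=
  exists u c', reach c u c' /\ c'.1 \in final N.

(* An Eve strategy: given the word played so far and Adam's new letter, return
   the configuration her step leads to (None = she does not move). *)
Definition lg_strategy := seq Sigma -> Sigma -> option conf.

Fixpoint lg_conf_aux (s : lg_strategy) (pre : seq Sigma) (c : conf)
    (w : seq Sigma) : option conf :=
  match w with
  | [::] => Some c
  | a :: w' => match s pre a with
               | Some c' => lg_conf_aux s (rcons pre a) c' w'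
               | None => None
               end
  end.

Definition lg_conf (s : lg_strategy) (w : seq Sigma) := lg_conf_aux s [::] conf0 w.

Definition lg_winning (s : lg_strategy) : Prop :=
  forall w c a, lg_conf s w = Some c ->
    match s w a with
    | Some c' => step c a c' /\ (lang (rcons w a) -> c'.1 \in final N)
    | None => (forall c', ~ step c a c') /\ ~ prefixL (rcons w a)
    end.

Definition eve_wins_letter_game : Prop := exists s, lg_winning s.

(* History: the list of rounds, each recorded as (letter, Adam's new config).
   Eve's strategy: from the history and Adam's new letter, her token's new
   configuration (None = she does not move). *)
Definition g1_strategy := seq (Sigma * conf) -> Sigma -> option conf.

Fixpoint g1_eve_aux (t : g1_strategy) (pre : seq (Sigma * conf)) (c : conf)
    (h : seq (Sigma * conf)) : option conf :=
  match h with
  | [::] => Some c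
  | (a, cA) :: h' => match t pre a with
                         | Some c' => g1_eve_aux t (rcons pre (a, cA)) c' h'
                         | None => None
                         end
  end.

Definition g1_eve (t : g1_strategy) h := g1_eve_aux t [::] conf0 h.

Fixpoint adam_valid (c : conf) (h : seq (Sigma * conf)) : Prop :=
  match h with
  | [::] => True
  | (a, c') :: h' => step c a c' /\ adam_valid c' h'
  end.

Definition adam_conf (h : seq (Sigma * conf)) : conf := last conf0 (map snd h).

Definition g1_winning (t : g1_strategy) : Prop :=
  forall h cE a, adam_valid conf0 h -> g1_eve t h = Some cE ->
    let cA := adam_conf h in
    match t h a with
    | Some cE' => step cE a cE' /\
        (forall cA', step cA a cA' -> cA'.1 \in final N -> cE'.1 \in final N)
    | None => (forall c', ~ step cE a c') /\
        ~ (exists cA', step cA a cA' /\ can_accept cA')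
    end.

Definition eve_wins_G1 : Prop := exists t, g1_winning t.

End OCN.

From mathcomp Require Import all_boot all_order all_algebra.
From Stdlib Require Import ClassicalEpsilon.

Set Implicit Arguments. Unset Strict Implicit. Unset Printing Implicit Defensive.

(* Let W be the set of positions (e, A) of G_1 from which Eve wins, i.e. the
   greatest relation closed under her responses.  W is transitive: from
   (x, z) Eve lets a virtual middle token answer Adam's token by her strategy
   from (y, z), and answers that token by her strategy from (x, y).  Hence from (e, e) she can always
   pick an a-successor e' with (e', A') in W for every a-successor A' of e.
   In the letter game she plays such moves; by transitivity her configuration
   stays W-related to every configuration reachable on the word read so far
   from which acceptance is still possible, so she accepts every word of the
   language and is stuck only when no extension of the word is accepted. *)

Section OneTokenGameToLetterGame.
Variables (Q Sigma : finType) (N : ocn Q Sigma).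

Local Notation C := (conf Q).
Local Notation fin c := (c.1 \in final N).

Lemma reach_cat c w v c' :
  reach N c (w ++ v) c' <-> exists m, reach N c w m /\ reach N m v c'.
Proof.
elim: w c => [|a w IH] c /=.
  by split=> [h|[m [<- h]]]; first exists c.
split=> [[c'' [hs /IH [m [h1 h2]]]]|[m [[c'' [hs hr]] h2]]].
  by exists m; split=> //; exists c''.
by exists c''; split=> //; apply/IH; exists m.
Qed.

Lemma reach_rcons c w a c' :
  reach N c (rcons w a) c' <-> exists m, reach N c w m /\ step N m a c'.
Proof.
rewrite -cats1 reach_cat.
by split=> [[m [h1 [c'' [hs <-]]]]|[m [h1 hs]]]; exists m => //; split=> //; exists c'.
Qed.

Lemma final_can_accept c : fin c -> can_accept N c.
Proof. by exists [::], c. Qed.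

Lemma step_can_accept c a c' : step N c a c' -> can_accept N c' -> can_accept N c.
Proof. by move=> hs [u [c'' [hr hf]]]; exists (a :: u), c''; split=> //; exists c'. Qed.

Definition g1_response (P : C -> C -> Prop) (e A : C) (a : Sigma) (e' : C) : Prop :=
  step N e a e' /\ forall A', step N A a A' -> (fin A' -> fin e') /\ P e' A'.

Definition g1_dead_end (e A : C) (a : Sigma) : Prop :=
  (forall e', ~ step N e a e') /\ ~ (exists A', step N A a A' /\ can_accept N A').

Definition g1_invariant (P : C -> C -> Prop) : Prop :=
  forall e A a, P e A -> (exists e', g1_response P e A a e') \/ g1_dead_end e A a.

Definition g1_win (e A : C) : Prop := exists P, g1_invariant P /\ P e A.

Lemma g1_invariant_win P e A : g1_invariant P -> P e A -> g1_win e A.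
Proof. by exists P. Qed.

Lemma g1_win_invariant : g1_invariant g1_win.
Proof.
move=> e A a [P [hP hPeA]].
case: (hP e A a hPeA) => [[e' [he H]]|]; last by right.
by left; exists e'; split=> // A' /H [hf hP']; split=> //; exists P.
Qed.

Lemma g1_win_respond e A a A' :
  g1_win e A -> step N A a A' -> can_accept N A' ->
  exists e', [/\ step N e a e', fin A' -> fin e' & g1_win e' A'].
Proof.
move=> hw hA' hacc; case: (g1_win_invariant a hw) => [[e' [he H]]|[_ []]].
  by have [hf hw'] := H A' hA'; exists e'.
by exists A'.
Qed.

Lemma g1_win_can_accept_step e A a A' :
  g1_win e A -> step N A a A' -> can_accept N A' ->
  exists2 e', step N e a e' & can_accept N e'.
Proof.
move=> hw hA' [u [c [hr hf]]].
elim: u e A a A' hw hA' hr => [|b u IH] e A a A' hw hA' hr.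
  move: hr => /= hr; subst c.
  have [e' [he hfin _]] := g1_win_respond hw hA' (final_can_accept hf).
  by exists e' => //; apply/final_can_accept/hfin.
have [A'' [hA'' hr']] := hr.
have hacc' : can_accept N A'' by exists u, c.
have [e' [he _ hw']] := g1_win_respond hw hA' (step_can_accept hA'' hacc').
have [e'' he' hacc''] := IH _ _ _ _ hw' hA'' hr'.
by exists e' => //; apply: step_can_accept he' hacc''.
Qed.

Lemma g1_response_unaccepting (P : C -> C -> Prop) e A a :
  (forall e' A', ~ can_accept N A' -> P e' A') ->
  ~ (exists A', step N A a A' /\ can_accept N A') ->
  (exists e', g1_response P e A a e') \/ g1_dead_end e A a.
Proof.
move=> hP hn; case: (classic (exists e', step N e a e')) => [[e' he]|hne].
  left; exists e'; split=> // A' hA'; split.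
    by move=> hf; case: hn; exists A'; split=> //; apply: final_can_accept.
  by apply: hP => hacc; apply: hn; exists A'.
by right; split=> // e' he; apply: hne; exists e'.
Qed.

(* The unaccepting pairs are needed: when the middle token is stuck, Adam's
   token may still move, though only to configurations that cannot accept. *)
Definition g1_win_comp (x z : C) : Prop :=
  (exists y, g1_win x y /\ g1_win y z) \/ ~ can_accept N z.

Lemma g1_win_comp_invariant : g1_invariant g1_win_comp.
Proof.
have unacc e' A' : ~ can_accept N A' -> g1_win_comp e' A' by right.
move=> x z a [[y [hxy hyz]]|hz]; last first.
  by apply: g1_response_unaccepting => // -[z' [hz' /(step_can_accept hz')]].
case: (g1_win_invariant a hxy) => [[x' [hx' Hx]]|[hnx hny]]; last first.
  right; split=> // -[z' [hz' /(g1_win_can_accept_step hyz hz') [y' hy' hacc]]].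
  by apply: hny; exists y'.
case: (g1_win_invariant a hyz) => [[y' [hy' Hy]]|[_ hnz]]; last first.
  exact: g1_response_unaccepting unacc hnz.
left; exists x'; split=> // z' hz'.
have [f1 r1] := Hy z' hz'; have [f2 r2] := Hx y' hy'.
by split=> [/f1 /f2|] //; left; exists y'.
Qed.

Lemma g1_win_trans x y z : g1_win x y -> g1_win y z -> g1_win x z.
Proof.
by move=> hxy hyz; apply: (g1_invariant_win g1_win_comp_invariant); left; exists y.
Qed.

Lemma g1_eve_aux_rcons (t : g1_strategy Q Sigma) pre c h a cA :
  g1_eve_aux t pre c (rcons h (a, cA)) =
  obind (fun=> t (pre ++ h) a) (g1_eve_aux t pre c h).
Proof.
elim: h pre c => [|[b cB] h IH] pre c /=; first by rewrite cats0; case: (t pre a).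
by case: (t pre b) => [c'|] //; rewrite IH cat_rcons.
Qed.

Lemma adam_valid_rcons c h a cA :
  adam_valid N c h -> step N (last c (map snd h)) a cA ->
  adam_valid N c (rcons h (a, cA)).
Proof.
elim: h c => [|[b cB] h IH] c /= hv hs; first by [].
by case: hv => hb hv; split; last exact: IH hv hs.
Qed.

(* The positions reachable when Eve follows a winning strategy of G_1 form an
   invariant relation. *)
Lemma g1_win_init : eve_wins_G1 N -> g1_win (conf0 N) (conf0 N).
Proof.
move=> [t ht].
pose P e A := exists h, [/\ adam_valid N (conf0 N) h, g1_eve N t h = Some e
                          & adam_conf N h = A].
apply: (@g1_invariant_win P); last by exists [::].
move=> e A a [h [hv he hA]].
have := ht h e a hv he; rewrite /= hA.
case E: (t h a) => [e'|] [H1 H2]; last by right.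
left; exists e'; split=> // A' hA'; split; first exact: H2.
exists (rcons h (a, A')); split.
- by apply: adam_valid_rcons; rewrite // -/(adam_conf N h) hA.
- by rewrite /g1_eve g1_eve_aux_rcons -/(g1_eve N t h) he /= E.
- by rewrite /adam_conf map_rcons last_rcons.
Qed.

Definition safe_move (e : C) (a : Sigma) (e' : C) : Prop := g1_response g1_win e e a e'.

Definition choose_move (e : C) (a : Sigma) : option C :=
  match excluded_middle_informative (exists e', safe_move e a e') with
  | left h => Some (proj1_sig (constructive_indefinite_description _ h))
  | right _ => None
  end.

Lemma choose_moveP e a :
  if choose_move e a is Some e' then safe_move e a e'
  else ~ exists e', safe_move e a e'.
Proof.
rewrite /choose_move; case: excluded_middle_informative => // h.
exact: proj2_sig (constructive_indefinite_description _ h).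
Qed.

Definition eve_conf (w : seq Sigma) : option C :=
  foldl (fun o a => obind (choose_move^~ a) o) (Some (conf0 N)) w.

Definition letter_strategy : lg_strategy Q Sigma :=
  fun w a => obind (choose_move^~ a) (eve_conf w).

Lemma eve_conf_rcons w a : eve_conf (rcons w a) = letter_strategy w a.
Proof. by rewrite /eve_conf foldl_rcons. Qed.

Lemma lg_conf_letter_strategy w : lg_conf N letter_strategy w = eve_conf w.
Proof.
have aux pre c : eve_conf pre = Some c ->
    lg_conf_aux letter_strategy pre c w = eve_conf (pre ++ w).
  elim: w pre c => [|a w IH] pre c hc /=; first by rewrite cats0 hc.
  rewrite -cat_rcons -eve_conf_rcons.
  case hr: (eve_conf (rcons pre a)) => [c'|]; first exact: IH hr.
  by rewrite /eve_conf foldl_cat -/(eve_conf _) hr; elim: {IH} w.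
exact: aux.
Qed.

Definition letter_inv (e : C) (w : seq Sigma) : Prop :=
  [/\ reach N (conf0 N) w e, g1_win e e &
      forall A, reach N (conf0 N) w A -> can_accept N A -> g1_win e A].

Lemma letter_inv_step e w a e' :
  letter_inv e w -> safe_move e a e' -> letter_inv e' (rcons w a).
Proof.
move=> [hr hee hA] [hs Hsafe]; split.
- by apply/reach_rcons; exists e.
- by have [_ h] := Hsafe e' hs.
move=> A' /reach_rcons [A [hrA hsA]] hacc.
have hw := hA A hrA (step_can_accept hsA hacc).
have [e'' [hs'' _ hw'']] := g1_win_respond hw hsA hacc.
by apply: g1_win_trans hw''; have [_] := Hsafe e'' hs''.
Qed.

Lemma eve_conf_inv : g1_win (conf0 N) (conf0 N) ->
  forall w e, eve_conf w = Some e -> letter_inv e w.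
Proof.
move=> h0; elim/last_ind=> [|w a IH] e.
  by move=> [<-]; split=> // A <-.
rewrite eve_conf_rcons /letter_strategy.
case E: (eve_conf w) => [e0|] //= hm.
by apply: letter_inv_step (IH e0 E) _; have := choose_moveP e0 a; rewrite hm.
Qed.

Lemma safe_move_final e w a e' :
  letter_inv e w -> safe_move e a e' -> lang N (rcons w a) -> fin e'.
Proof.
move=> [_ _ hA] [_ Hsafe] [c' [/reach_rcons [A [hrA hsA]] hf]].
have hacc := final_can_accept hf.
have hw := hA A hrA (step_can_accept hsA hacc).
have [e'' [hs'' hfin _]] := g1_win_respond hw hsA hacc.
by have [hfin' _] := Hsafe e'' hs''; apply/hfin'/hfin.
Qed.

Lemma no_safe_move_dead_end e w a :
  letter_inv e w -> ~ (exists e', safe_move e a e') ->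
  (forall e', ~ step N e a e') /\ ~ prefixL N (rcons w a).
Proof.
move=> [_ hee hA] hno.
have hstuck : forall e', ~ step N e a e'.
  by case: (g1_win_invariant a hee) => [[e' ?]|[]] //; case: hno; exists e'.
split=> // -[u [c' [+ hf]]]; rewrite cat_rcons => /reach_cat [m [hm [m' [hsm hrm]]]].
have hacc' : can_accept N m' by exists u, c'.
have hw := hA m hm (step_can_accept hsm hacc').
by have [e' he _] := g1_win_can_accept_step hw hsm hacc'; apply: (hstuck e').
Qed.

Lemma letter_strategy_winning :
  g1_win (conf0 N) (conf0 N) -> lg_winning N letter_strategy.
Proof.
move=> h0 w c a; rewrite lg_conf_letter_strategy => hc.
have hinv := eve_conf_inv h0 hc.
rewrite /letter_strategy hc /=; have := choose_moveP c a.
case: (choose_move c a) => [e'|] hmove; last exact: no_safe_move_dead_end hinv hmove.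
by split; [case: hmove | apply: safe_move_final hinv hmove].
Qed.

End OneTokenGameToLetterGame.

Theorem lemma1 (Q Sigma : finType) (N : ocn Q Sigma) :
  eve_wins_G1 N -> eve_wins_letter_game N.
Proof.
move=> hG1; exists (letter_strategy N).
exact/letter_strategy_winning/g1_win_init.
Qed.
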